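(* Let $K$ be a field, $S=K[x_1,\ldots,x_n]$, let $m<n$, let $S'=K[x_1,\ldots,x_m]$ and let $J\subset S'$ be a monomial ideal. Set $I=JS$. Then for any $k$ with $m<k\le n$, \[ \operatorname{sdepth}(S/(I,x_k))=\operatorname{sdepth}(S/I)-1. \]
   Context: For a monomial ideal $I\subset S$, let $I^c$ be the $K$-linear subspace of $S$ spanned by all monomials not in $I$, so $S/I\cong I^c$ as $K$-vector spaces. For a monomial $v$ and a subset $Z\subset\{x_1,\ldots,x_n\}$, the $K$-subspace $vK[Z]$ spanned by all monomials $vw$ with $w$ a monomial in $K[Z]$ is a Stanley space of dimension $|Z|$. A Stanley decomposition $\mathcal D$ of $S/I$ is a decomposition of $I^c$ as a finite direct sum of Stanley spaces; $\operatorname{sdepth}(\mathcal D)$ is the minimal dimension of a Stanley space in $\mathcal D$, and $\operatorname{sdepth}(S/I)$ is the maximum of $\operatorname{sdepth}(\mathcal D)$ over all Stanley decompositions $\mathcal D$ of $S/I$. *)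

From mathcomp Require Import all_boot.
Set Implicit Arguments. Unset Strict Implicit. Unset Printing Implicit Defensive.

(* monomials x^u of K[x_1,...,x_n], u : exponent vector; index i : 'I_n
   stands for the variable x_{i+1} *)
Definition mon (n : nat) := {ffun 'I_n -> nat}.

(* a set of monomials; a monomial ideal is identified with the set of
   monomials it contains (it is spanned by them) *)
Definition monset (n : nat) := mon n -> Prop.

Definition mdiv n (u v : mon n) : bool := [forall i, u i <= v i].

Definition is_monomial_ideal n (I : monset n) : Prop :=
  forall u v : mon n, I u -> mdiv u v -> I v.

Definition mon1 n : mon n := [ffun => 0%N].

Definition restr m n (hmn : m <= n) (u : mon n) : mon m :=
  [ffun i : 'I_m => u (widen_ord hmn i)].

(* extension J S of J in K[x_1..x_m] to S = K[x_1..x_n]: a monomial of S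
   lies in JS iff its K[x_1..x_m]-part lies in J *)
Definition extend_ideal m n (hmn : m <= n) (J : monset m) : monset n :=
  fun u => J (restr hmn u).

Definition add_var n (I : monset n) (k : 'I_n) : monset n :=
  fun u => I u \/ (0 < u k)%N.

(* Stanley space v K[Z], given by the pair (v, Z) *)
Definition stanley_space n := (mon n * {set 'I_n})%type.

(* membership of the monomial u in v K[Z]: u = v w with w in K[Z] *)
Definition in_stanley n (p : stanley_space n) (u : mon n) : bool :=
  mdiv p.1 u && [forall i, (i \notin p.2) ==> (u i == p.1 i)].

(* D is a Stanley decomposition of S/I: I^c is the direct sum of the
   Stanley spaces of D, i.e. (monomials being a basis) every monomial not
   in I lies in exactly one space of D and monomials in I lie in none. *)
Definition stanley_decomposition n (I : monset n) (D : seq (stanley_space n)) :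
  Prop :=
  forall u : mon n,
    (~ I u -> count (fun p => in_stanley p u) D = 1%N) /\
    (I u -> count (fun p => in_stanley p u) D = 0%N).

Definition sdepth_ge n (I : monset n) (d : nat) : Prop :=
  exists D : seq (stanley_space n),
    stanley_decomposition I D /\ (forall p, p \in D -> d <= #|p.2|).

(* sdepth(S/I) = d  (maximum over decompositions of the minimal dimension) *)
Definition is_sdepth n (I : monset n) (d : nat) : Prop :=
  sdepth_ge I d /\ ~ sdepth_ge I d.+1.

From mathcomp Require Import all_boot.
From Stdlib Require Import Classical ClassicalEpsilon.
Set Implicit Arguments. Unset Strict Implicit. Unset Printing Implicit Defensive.

(* A monomial lies outside (I, x_k) iff it lies outside I and has x_k-degree 0.
   Hence dropping x_k from the free variables of the spaces of a decomposition
   of S/I, and discarding the spaces whose generator involves x_k, decomposes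
   S/(I, x_k) at depth one less.  Conversely, when I does not involve x_k, the
   spaces of a decomposition of S/(I, x_k) neither involve nor use x_k, and
   freeing x_k in each of them decomposes S/I at depth one more.  Both
   sdepths exist because Stanley decompositions exist, which is proved by
   induction on the number of variables with the help of Dickson's lemma. *)

Definition mon_cons n (j : nat) (u : mon n) : mon n.+1 :=
  [ffun i => if unlift ord0 i is Some i' then u i' else j].

Definition mon_behead n (u : mon n.+1) : mon n := [ffun i => u (lift ord0 i)].

Lemma mon_cons0 n j (u : mon n) : mon_cons j u ord0 = j.
Proof. by rewrite ffunE unlift_none. Qed.

Lemma mon_consS n j (u : mon n) i : mon_cons j u (lift ord0 i) = u i.
Proof. by rewrite ffunE liftK. Qed.

Lemma mon_cons_behead n (u : mon n.+1) : mon_cons (u ord0) (mon_behead u) = u.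
Proof.
by apply/ffunP => i; rewrite ffunE; case: unliftP => [i' ->|->] //; rewrite ffunE.
Qed.

Lemma mon0 (u : mon 0) : u = mon1 0.
Proof. by apply/ffunP => -[]. Qed.

Lemma forall_ordS n (P : pred 'I_n.+1) :
  [forall i, P i] = P ord0 && [forall i : 'I_n, P (lift ord0 i)].
Proof.
apply/forallP/andP => [P_all|[P0 /forallP P_lift] i].
  by split => //; apply/forallP.
by case: (unliftP ord0 i) => [j ->|->].
Qed.

Lemma mdiv_refl n (u : mon n) : mdiv u u.
Proof. exact/forallP. Qed.

Lemma mdiv_cons n i j (v u : mon n) :
  mdiv (mon_cons i v) (mon_cons j u) = (i <= j) && mdiv v u.
Proof.
rewrite /mdiv forall_ordS !mon_cons0; congr andb.
by apply: eq_forallb => x; rewrite !mon_consS.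
Qed.

Definition slice n (j : nat) (U : monset n.+1) : monset n :=
  fun u => U (mon_cons j u).

Lemma slice_ideal n j (U : monset n.+1) :
  is_monomial_ideal U -> is_monomial_ideal (slice j U).
Proof. by move=> hU u v Uu uv; apply: hU Uu _; rewrite mdiv_cons leqnn. Qed.

Lemma slice_mono n i j (U : monset n.+1) u :
  is_monomial_ideal U -> i <= j -> slice i U u -> slice j U u.
Proof. by move=> hU ij Uu; apply: hU Uu _; rewrite mdiv_cons ij mdiv_refl. Qed.

Definition generated_by n (s : seq (mon n)) (U : monset n) : Prop :=
  forall u, U u <-> exists2 g, g \in s & mdiv g u.

Lemma seq_exists_bounded (T : eqType) (Q : T -> nat -> Prop) (s : seq T) :
  (forall g, g \in s -> exists j, Q g j) ->
  exists N, forall g, g \in s -> exists2 j, j <= N & Q g j.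
Proof.
elim: s => [|a s IH] H; first by exists 0 => g; rewrite in_nil.
have [ja Qa] := H a (mem_head _ _).
have [N HN] := IH (fun g gs => H g (@mem_behead _ (a :: s) g gs)).
exists (maxn ja N) => g; rewrite inE => /predU1P [->|gs].
  by exists ja; rewrite ?leq_maxl.
by have [j jN Qj] := HN g gs; exists j; rewrite // leq_max jN orbT.
Qed.

(* The union of the slices is an ideal in one variable less; its finitely
   many generators all appear by some slice N, and then so does everything. *)
Lemma slices_stabilize n (U : monset n.+1) :
  (forall V : monset n, is_monomial_ideal V -> exists s, generated_by s V) ->
  is_monomial_ideal U ->
  exists N, forall j u, N <= j -> slice j U u -> slice N U u.
Proof.
move=> fg hU; pose V u := exists j, slice j U u.
have hV : is_monomial_ideal V.
  by move=> u v [j Uju] uv; exists j; apply: slice_ideal uv.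
have [s gen_s] := fg V hV.
have [N HN] : exists N, forall g, g \in s -> exists2 j, j <= N & slice j U g.
  by apply: seq_exists_bounded => g gs; apply/gen_s; exists g; rewrite ?mdiv_refl.
exists N => j u _ Uju.
have [g gs gu] : exists2 g, g \in s & mdiv g u by apply/gen_s; exists j.
have [i iN Uig] := HN g gs.
by apply: hU Uig _; rewrite mdiv_cons iN.
Qed.

Lemma dickson n (U : monset n) :
  is_monomial_ideal U -> exists s, generated_by s U.
Proof.
elim: n U => [|n IH] U hU.
  case: (classic (U (mon1 0))) => U1.
    exists [:: mon1 0] => u; rewrite (mon0 u); split => // _.
    by exists (mon1 0); rewrite ?mem_head ?mdiv_refl.
  by exists [::] => u; rewrite (mon0 u); split => // -[g]; rewrite in_nil.
have [N stab] := slices_stabilize IH hU.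
have [f gen_f] := choice (fun j s => generated_by s (slice j U))
                         (fun j => IH _ (slice_ideal (j := j) hU)).
exists [seq mon_cons j g | j <- iota 0 N.+1, g <- f j] => u.
rewrite -(mon_cons_behead u); move: (u ord0) (mon_behead u) => j {}u.
split=> [Uju|[_ /allpairsPdep [i [g [_ gfi ->]] gu]]].
  have Uiu : slice (minn j N) U u.
    by case: leqP => // jN; apply: stab (ltnW jN) _.
  have [g gs gu] := (gen_f _ u).1 Uiu; exists (mon_cons (minn j N) g).
    by apply/allpairsPdep; exists (minn j N), g; rewrite mem_iota add0n ltnS geq_minr.
  by rewrite mdiv_cons geq_minl gu.
have Uig : slice i U g by apply/gen_f; exists g; rewrite ?mdiv_refl.
exact: hU Uig gu.
Qed.

Definition lift_vars n (Z : {set 'I_n}) : {set 'I_n.+1} := [set lift ord0 i | i in Z].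

Lemma mem_lift_vars n (Z : {set 'I_n}) i : (lift ord0 i \in lift_vars Z) = (i \in Z).
Proof. exact/mem_imset/lift_inj. Qed.

Lemma ord0_lift_vars n (Z : {set 'I_n}) : (ord0 \in lift_vars Z) = false.
Proof. by apply/imsetP => -[i _ /eqP]; rewrite (negbTE (neq_lift _ _)). Qed.

Definition cons_space n (j : nat) (p : stanley_space n) : stanley_space n.+1 :=
  (mon_cons j p.1, lift_vars p.2).

Definition cons_space_free n (j : nat) (p : stanley_space n) : stanley_space n.+1 :=
  (mon_cons j p.1, ord0 |: lift_vars p.2).

Lemma in_stanley_cons n i j (p : stanley_space n) u :
  in_stanley (cons_space i p) (mon_cons j u) = (i == j) && in_stanley p u.
Proof.
rewrite /in_stanley /= mdiv_cons forall_ordS ord0_lift_vars !mon_cons0 /=.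
under eq_forallb => x do rewrite mem_lift_vars !mon_consS.
by rewrite eq_sym; case: eqVneq => [->|]; rewrite ?leqnn ?andbF.
Qed.

Lemma in_stanley_cons_free n i j (p : stanley_space n) u :
  in_stanley (cons_space_free i p) (mon_cons j u) = (i <= j) && in_stanley p u.
Proof.
rewrite /in_stanley /= mdiv_cons forall_ordS setU11 /= -andbA.
under [X in _ && (_ && X)]eq_forallb => x
  do rewrite in_setU1 eq_sym (negbTE (neq_lift _ _)) mem_lift_vars !mon_consS.
by [].
Qed.

Fixpoint stack_slices n (f : nat -> seq (stanley_space n)) (N : nat) :
    seq (stanley_space n.+1) :=
  if N is N'.+1 then stack_slices f N' ++ map (cons_space N') (f N') else [::].

Lemma count_stack_slices n (f : nat -> seq (stanley_space n)) N j u :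
  count (fun p => in_stanley p (mon_cons j u)) (stack_slices f N) =
  if j < N then count (fun p => in_stanley p u) (f j) else 0.
Proof.
elim: N => [|N IH] //=; rewrite count_cat IH count_map.
under [count (preim _ _) _]eq_count => p do rewrite /= in_stanley_cons.
rewrite ltnS; case: ltngtP => [jN|Nj|<-]; try by rewrite /= count_pred0 ?addn0.
by rewrite add0n; apply: eq_count.
Qed.

(* Slices below the stabilization degree N are decomposed degree by degree;
   a decomposition of slice N, with x_1 freed in every space, covers all the
   degrees >= N at once. *)
Lemma stanley_decomposition_exists n (I : monset n) :
  is_monomial_ideal I -> exists D, stanley_decomposition I D.
Proof.
elim: n I => [|n IH] I hI.
  case: (classic (I (mon1 0))) => I1; [exists [::] | exists [:: (mon1 0, set0)]];
    move=> u; rewrite (mon0 u) //; split => // _ /=.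
  suff -> : in_stanley (mon1 0, set0) (mon1 0) by [].
  by rewrite /in_stanley mdiv_refl; apply/forallP => -[].
have [N stab] := slices_stabilize (@dickson n) hI.
have [f dec_f] := choice (fun j D => stanley_decomposition (slice j I) D)
                         (fun j => IH _ (slice_ideal (j := j) hI)).
exists (stack_slices f N ++ map (cons_space_free N) (f N)) => u.
rewrite -(mon_cons_behead u); move: (u ord0) (mon_behead u) => j {}u.
rewrite count_cat count_stack_slices count_map.
under [count (preim _ _) _]eq_count => p do rewrite /= in_stanley_cons_free.
case: ltnP => [jN|Nj].
  by rewrite /= count_pred0 addn0; apply: dec_f.
have [dec_out dec_in] := dec_f N u; rewrite add0n; split => [nIju|Iju].
  by rewrite dec_out // => INu; apply/nIju/(slice_mono hI Nj INu).
exact/dec_in/(stab _ _ Nj Iju).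
Qed.

Lemma decomposition_covers n (I : monset n) D u :
  stanley_decomposition I D -> ~ I u -> exists2 p, p \in D & in_stanley p u.
Proof. by move=> dec nIu; apply/hasP; rewrite has_count ((dec u).1 nIu). Qed.

Lemma decomposition_avoids n (I : monset n) D p u :
  stanley_decomposition I D -> p \in D -> in_stanley p u -> ~ I u.
Proof.
move=> dec pD pu Iu; have := (dec u).2 Iu; apply/eqP; rewrite -lt0n -has_count.
by apply/hasP; exists p.
Qed.

Definition set_exp n (k : 'I_n) (c : nat) (u : mon n) : mon n :=
  [ffun i => if i == k then c else u i].

Definition var_free n (I : monset n) (k : 'I_n) : Prop :=
  forall u, I u <-> I (set_exp k 0 u).

Lemma in_stanley_fixed n (p : stanley_space n) (u : mon n) i :
  i \notin p.2 -> in_stanley p u -> u i = p.1 i.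
Proof. by move=> ip /andP [_ /forallP /(_ i)]; rewrite ip => /eqP. Qed.

Lemma in_stanley_setD1 n k (p : stanley_space n) (u : mon n) :
  p.1 k = 0 -> u k = 0 -> in_stanley (p.1, p.2 :\ k) u = in_stanley p u.
Proof.
move=> pk uk; rewrite /in_stanley /=; congr andb; apply: eq_forallb => i.
by rewrite in_setD1; case: eqVneq => [->|]; rewrite ?uk ?pk ?implybT.
Qed.

Lemma in_stanley_setU1 n k (p : stanley_space n) (u : mon n) :
  p.1 k = 0 -> k \notin p.2 ->
  in_stanley (p.1, k |: p.2) u = in_stanley p (set_exp k 0 u).
Proof.
move=> pk kZ; rewrite /in_stanley /=; congr andb; apply: eq_forallb => i;
  rewrite ffunE ?in_setU1; case: eqVneq => [->|] //=; by rewrite pk ?(negbTE kZ).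
Qed.

Lemma sdepth_ge_add_var n (I : monset n) k d :
  sdepth_ge I d.+1 -> sdepth_ge (add_var I k) d.
Proof.
case=> D [dec dimD].
exists [seq (p.1, p.2 :\ k) | p : stanley_space n <- D & p.1 k == 0].
split => [u|_ /mapP [p + ->]].
  rewrite count_map count_filter; case: (posnP (u k)) => [uk|uk_gt0].
    rewrite (eq_in_count (a2 := fun p => in_stanley p u)); last first.
      move=> p _ /=; case: eqP => [pk|pk]; first by rewrite andbT in_stanley_setD1.
      rewrite andbF; apply/esym/negP => /andP [/forallP /(_ k)].
      by rewrite uk leqn0 => /eqP.
    have [dec_out dec_in] := dec u; split => [nIku|[Iu|]].
    - by apply: dec_out => Iu; apply: nIku; left.
    - exact: dec_in.
    - by rewrite uk.
  split => [nIku|_]; first by exfalso; apply: nIku; right.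
  rewrite (eq_count (a2 := pred0)) ?count_pred0 // => p /=.
  apply/negP => /andP [pu /eqP pk]; move: uk_gt0.
  by rewrite (in_stanley_fixed _ pu) /= ?setD11 ?pk.
rewrite mem_filter => /andP [_ pD]; have := dimD p pD.
by rewrite (cardsD1 k p.2); case: (k \in p.2); rewrite ?add1n ?add0n // => /ltnW.
Qed.

Lemma stanley_space_avoids_var n (I : monset n) k D p :
  stanley_decomposition (add_var I k) D -> p \in D -> p.1 k = 0 /\ k \notin p.2.
Proof.
move=> dec pD; have avoid u : in_stanley p u -> ~ 0 < u k.
  by move=> pu uk; apply: (decomposition_avoids dec pD pu); right.
split.
  apply/eqP; rewrite -leqn0 leqNgt; apply/negP; apply: avoid.
  by rewrite /in_stanley mdiv_refl; apply/forallP => i; rewrite eqxx implybT.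
apply/negP => kp; apply: (avoid (set_exp k (p.1 k).+1 p.1)); last by rewrite ffunE eqxx.
rewrite /in_stanley; apply/andP; split; apply/forallP => i; rewrite ffunE.
  by case: (eqVneq i k) => [->|].
by case: (eqVneq i k) => [->|]; rewrite ?kp ?eqxx ?implybT.
Qed.

Lemma sdepth_ge_var_free n (I : monset n) k d :
  var_free I k -> sdepth_ge (add_var I k) d -> sdepth_ge I d.+1.
Proof.
move=> freeI [D [dec dimD]].
exists [seq (p.1, k |: p.2) | p <- D]; split => [u|_ /mapP [p pD ->]].
  rewrite count_map (eq_in_count (a2 := fun p => in_stanley p (set_exp k 0 u))).
    have Ik0 : add_var I k (set_exp k 0 u) <-> I u.
      rewrite /add_var ffunE eqxx ltnn (freeI u).
      by split => [[]|] //; left.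
    by have [dec_out dec_in] := dec (set_exp k 0 u); rewrite -Ik0.
  move=> p pD /=; have [pk kp] := stanley_space_avoids_var dec pD.
  exact: in_stanley_setU1.
have [_ kp] := stanley_space_avoids_var dec pD.
by rewrite cardsU1 kp add1n ltnS dimD.
Qed.

Lemma is_sdepth_var_free n (I : monset n) k d :
  var_free I k -> is_sdepth (add_var I k) d -> is_sdepth I d.+1.
Proof.
move=> freeI [ge_d not_ge_d1]; split; first exact: sdepth_ge_var_free ge_d.
by move/(sdepth_ge_add_var k).
Qed.

Lemma sdepth_ge_le_dim n (I : monset n) d :
  ~ I (mon1 n) -> sdepth_ge I d -> d <= n.
Proof.
move=> nI1 [D [dec dimD]]; have [p pD _] := decomposition_covers dec nI1.
by rewrite -[n]card_ord (leq_trans (dimD p pD)) ?max_card.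
Qed.

Lemma exists_last_true (P : nat -> Prop) N : P 0 -> ~ P N -> exists d, P d /\ ~ P d.+1.
Proof.
elim: N => [|N IH] P0 nPN; first by [].
by case: (classic (P N)) => PN; [exists N | apply: IH].
Qed.

Lemma sdepth_exists n (I : monset n) :
  is_monomial_ideal I -> ~ I (mon1 n) -> exists d, is_sdepth I d.
Proof.
move=> hI nI1; apply: (@exists_last_true _ n.+1) => [|ge_n1].
  by have [D dec] := stanley_decomposition_exists hI; exists D.
by have := sdepth_ge_le_dim nI1 ge_n1; rewrite ltnn.
Qed.

Lemma extend_ideal_monomial m n (hmn : m <= n) (J : monset m) :
  is_monomial_ideal J -> is_monomial_ideal (extend_ideal hmn J).
Proof.
move=> hJ u v Ju /forallP uv; apply: hJ Ju _.
by apply/forallP => i; rewrite !ffunE.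
Qed.

Lemma add_var_monomial n (I : monset n) k :
  is_monomial_ideal I -> is_monomial_ideal (add_var I k).
Proof.
move=> hI u v [Iu|uk] uv; first by left; apply: hI uv.
by right; apply: leq_trans uk (forallP uv k).
Qed.

Lemma restr_mon1 m n (hmn : m <= n) : restr hmn (mon1 n) = mon1 m.
Proof. by apply/ffunP => i; rewrite !ffunE. Qed.

Lemma extend_ideal_var_free m n (hmn : m <= n) (J : monset m) (k : 'I_n) :
  m <= k -> var_free (extend_ideal hmn J) k.
Proof.
move=> mk u; rewrite /extend_ideal.
suff -> : restr hmn (set_exp k 0 u) = restr hmn u by [].
apply/ffunP => i; rewrite !ffunE; case: eqP => // /(congr1 val) /= ik.
by move: (ltn_ord i); rewrite ik ltnNge mk.
Qed.

Theorem lemma1p2 (n m : nat) (hmn : m < n) (J : monset m)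
  (hJ : is_monomial_ideal J) (hJprop : ~ J (mon1 m))
  (k : 'I_n) (hk : m <= k) :
  exists s : nat,
    is_sdepth (extend_ideal (ltnW hmn) J) s.+1 /\
    is_sdepth (add_var (extend_ideal (ltnW hmn) J) k) s.
Proof.
set I := extend_ideal (ltnW hmn) J.
have hIk : is_monomial_ideal (add_var I k).
  exact/add_var_monomial/extend_ideal_monomial.
have nIk1 : ~ add_var I k (mon1 n).
  by rewrite /add_var /I /extend_ideal restr_mon1 ffunE => -[].
have [s sdepth_s] := sdepth_exists hIk nIk1.
exists s; split => //.
exact: is_sdepth_var_free (extend_ideal_var_free _ _ hk) sdepth_s.
Qed.
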